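(* Let $\mathcal{A}=\{A_0,\ldots,A_d\}$ be an association scheme with splitting field $L$, and let $E\subseteq\mathbb{C}$ be a field containing $L$ that is closed under complex conjugation. If $\psi:E[\mathcal{A}]\to E[\mathcal{A}]$ is a non-zero $E$-linear map with $(MN)^\psi=M^\psi N^\psi$ and $(M\circ N)^\psi=M^\psi\circ N^\psi$ for all $M,N\in E[\mathcal{A}]$, then $(M^T)^\psi=(M^\psi)^T$ and $(M^* )^\psi=(M^\psi)^*$ for all $M\in E[\mathcal{A}]$.
   Context: An association scheme on $v$ vertices with $d$ classes is a set $\mathcal{A}=\{A_0,\ldots,A_d\}$ of $v\times v$ $(0,1)$-matrices such that $A_0=I$, $\sum_i A_i=J$ (the all-ones matrix), $A_i^T\in\mathcal{A}$ for all $i$, $A_iA_j=A_jA_i$ for all $i,j$, and each $A_iA_j$ lies in the span of $\mathcal{A}$. Its principal idempotents $E_0,\ldots,E_d$ are the pairwise orthogonal Hermitian idempotents with $\sum_jE_j=I$ forming a basis of the span of $\mathcal{A}$, with $A_iE_j=p_i(j)E_j$; the splitting field $L$ is $\mathbb{Q}$ adjoined all $p_i(j)$. $E[\mathcal{A}]$ is the $E$-span of $\mathcal{A}$; $\circ$ denotes the Schur (entrywise) product and $M^*$ the conjugate transpose. *)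

From mathcomp Require Import all_boot all_algebra all_field.
From mathcomp Require Import complex.
From mathcomp Require Import Rstruct.
Set Implicit Arguments.
Unset Strict Implicit.
Unset Printing Implicit Defensive.
Import GRing.Theory Num.Theory.
Local Open Scope ring_scope.

Definition CC : numClosedFieldType := complex Rdefinitions.R.

Definition ctrmx (v : nat) (M : 'M[CC]_v) : 'M[CC]_v :=
  (map_mx (fun x : CC => x^*) M)^T.

Definition schur (v : nat) (M N : 'M[CC]_v) : 'M[CC]_v :=
  \matrix_(i, j) (M i j * N i j).

Definition is_subfield (S : {pred CC}) : Prop :=
  ((0 \in S) /\
      (1 \in S) /\
      ((forall x y, x \in S -> y \in S -> x + y \in S)) /\
      ((forall x, x \in S -> - x \in S)) /\
      ((forall x y, x \in S -> y \in S -> x * y \in S)) /\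
      ((forall x, x \in S -> x != 0 -> x^-1 \in S))).

Definition span_in (S : {pred CC}) (v n : nat) (B : 'I_n -> 'M[CC]_v)
    (M : 'M[CC]_v) : Prop :=
  exists c : 'I_n -> CC, (forall i, c i \in S) /\ M = \sum_(i < n) c i *: B i.

Definition Cspan (v n : nat) (B : 'I_n -> 'M[CC]_v) (M : 'M[CC]_v) : Prop :=
  span_in predT B M.

Definition association_scheme (v d : nat) (A : 'I_d.+1 -> 'M[CC]_v) : Prop :=
  (((forall i x y, A i x y = 0 \/ A i x y = 1)) /\
      (A ord0 = 1%:M) /\
      (\sum_(i < d.+1) A i = const_mx 1) /\
      ((forall i, exists j, (A i)^T = A j)) /\
      ((forall i j, A i *m A j = A j *m A i)) /\
      ((forall i j, Cspan A (A i *m A j)))).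

Definition principal_idempotents (v d : nat) (A Ev : 'I_d.+1 -> 'M[CC]_v)
    : Prop :=
  (((forall j, Ev j *m Ev j = Ev j)) /\
      ((forall j k, j != k -> Ev j *m Ev k = 0)) /\
      ((forall j, ctrmx (Ev j) = Ev j)) /\
      (\sum_(j < d.+1) Ev j = 1%:M) /\
      ((forall c : 'I_d.+1 -> CC, \sum_(j < d.+1) c j *: Ev j = 0 ->
          forall j, c j = 0)) /\
      ((forall j, Cspan A (Ev j))) /\
      ((forall i, Cspan Ev (A i))) /\
      ((forall i j, exists p : CC, A i *m Ev j = p *: Ev j))).

(* p is one of the eigenvalues p_i(j) (A_i E_j = p_i(j) E_j); the splitting
   field L is Q adjoined all such p. *)
Definition scheme_eigenvalue (v d : nat) (A : 'I_d.+1 -> 'M[CC]_v) (p : CC)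
    : Prop :=
  exists Ev, principal_idempotents A Ev /\
    exists i j, A i *m Ev j = p *: Ev j.

(* psi preserves the Schur product, so it sends every 0/1-matrix of E[A] to a
   0/1-matrix; with multiplicativity and psi <> 0 this forces psi(J) = J and
   psi(I) = I.  If A_j = A_i^T then I o (A_i A_j) = I o (A_i J), both diagonals
   holding the valency, and psi transports this identity to S = psi(A_i),
   T = psi(A_j): every 1 in a row of S is matched by a 1 in the corresponding
   column of T, and vice versa, whence T = S^T.  Linearity extends this to
   E[A]; as the A_i and psi(A_i) are real, conjugate transposition of
   sum c_i A_i only conjugates the coefficients c_i, which stay in E. *)

From mathcomp Require Import all_boot all_algebra all_field.
From mathcomp Require Import complex.
From mathcomp Require Import Rstruct.
Import GRing.Theory Num.Theory.
Set Implicit Arguments.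
Unset Strict Implicit.
Unset Printing Implicit Defensive.
Local Open Scope ring_scope.

Section ZeroOne.
Variable R : numDomainType.

Definition zero_one (x : R) := x = 0 \/ x = 1.

Lemma zero_one_idem x : x * x = x -> zero_one x.
Proof.
move=> xx; have /eqP : x * (x - 1) = 0 by rewrite mulrBr mulr1 xx subrr.
by rewrite mulf_eq0 subr_eq0 => /orP[] /eqP; [left | right].
Qed.

Lemma zero_one_ge0 x : zero_one x -> 0 <= x.
Proof. by case=> ->; rewrite ?ler01. Qed.

Lemma zero_one_le1 x : zero_one x -> x <= 1.
Proof. by case=> ->; rewrite ?ler01. Qed.

Lemma zero_one_mul x y : zero_one x -> zero_one y -> zero_one (x * y).
Proof.
by case=> ->; case=> ->; rewrite ?(mul0r, mulr0, mulr1); [left | left | left | right].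
Qed.

Lemma zero_one_supp_subset (I : finType) (f g : I -> R) :
    (forall z, zero_one (f z)) -> (forall z, zero_one (g z)) ->
  \sum_z f z * g z = \sum_z f z -> forall z, f z = 1 -> g z = 1.
Proof.
move=> f01 g01 sum_fg z fz1.
have sum0 : \sum_z f z * (1 - g z) = 0.
  rewrite -[RHS](subrr (\sum_z f z)) -{2}sum_fg -sumrB.
  by apply: eq_bigr => i _; rewrite mulrBr mulr1.
have ge0 i : true -> 0 <= f i * (1 - g i).
  by rewrite mulr_ge0 ?subr_ge0 ?zero_one_ge0 ?zero_one_le1.
have /eqP := psumr_eq0P ge0 sum0 (i := z) isT.
by rewrite fz1 mul1r subr_eq0 => /eqP <-.
Qed.

Lemma zero_one_sum1 (I : finType) (f : I -> R) a b :
    (forall z, zero_one (f z)) -> \sum_z f z = 1 -> f a = 1 -> b != a -> f b = 0.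
Proof.
move=> f01 + fa1 b_neq_a; rewrite (bigD1 a) //= fa1 -[X in _ = X]addr0 => /addrI sum0.
by apply: (psumr_eq0P _ sum0) => // i _; apply: zero_one_ge0.
Qed.

Variable n : nat.
Local Notation J := (const_mx 1 : 'M[R]_n).

Definition zero_one_mx (M : 'M[R]_n) := forall i j, zero_one (M i j).

Lemma zero_one_mx_sqr_scale (P : 'M[R]_n) :
  zero_one_mx P -> P *m P = n%:R *: P -> P != 0 -> P = J.
Proof.
move=> P01 PP P_neq0.
have full x y w : P x y = 1 -> P x w = 1 /\ P w y = 1.
  move=> Pxy; have sum_n : \sum_z 1 * (P x z * P z y) = \sum_(z < n) 1.
    rewrite sumr_const card_ord; have := congr1 (fun M : 'M_n => M x y) PP.
    by rewrite !mxE Pxy mulr1 => <-; apply: eq_bigr => z _; rewrite mul1r.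
  have := zero_one_supp_subset _ (fun z => zero_one_mul (P01 x z) (P01 z y)) sum_n.
  move=> /(_ (fun _ => or_intror erefl) w erefl).
  case: (P01 x w) (P01 w y) => -> [] ->; rewrite ?mul0r ?mulr0 ?mulr1 // => /eqP;
  by rewrite eq_sym oner_eq0.
case: (pickP (fun xy : 'I_n * 'I_n => P xy.1 xy.2 != 0)) => [[x y] /= Pxy | P0]; last first.
  by case/eqP: P_neq0; apply/matrixP => x y; rewrite mxE; apply/eqP/negbFE/(P0 (x, y)).
have Pxy1 : P x y = 1 by case: (P01 x y) Pxy => ->; rewrite ?eqxx.
apply/matrixP => x' y'; rewrite mxE.
by have [Pxy' _] := full _ _ y' Pxy1; have [_ ->] := full _ _ x' Pxy'.
Qed.

Lemma zero_one_mx_idem_stochastic (Q : 'M[R]_n) :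
  zero_one_mx Q -> Q *m Q = Q -> Q *m J = J -> J *m Q = J -> Q = 1%:M.
Proof.
move=> Q01 QQ QJ JQ.
have row x : \sum_z Q x z = 1.
  have := congr1 (fun M : 'M_n => M x x) QJ; rewrite !mxE => <-.
  by apply: eq_bigr => z _; rewrite mxE mulr1.
have col y : \sum_z Q z y = 1.
  have := congr1 (fun M : 'M_n => M y y) JQ; rewrite !mxE => <-.
  by apply: eq_bigr => z _; rewrite mxE mul1r.
have Q1_diag x y : Q x y = 1 -> x = y.
  move=> Qxy; have sum_Qx : \sum_z Q x z * Q z y = \sum_z Q x z.
    by have := congr1 (fun M : 'M_n => M x y) QQ; rewrite row mxE Qxy.
  have Qyy := zero_one_supp_subset (Q01 x) (fun z => Q01 z y) sum_Qx Qxy.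
  apply/eqP; apply: contraT => /(zero_one_sum1 (fun z => Q01 z y) (col y) Qyy).
  by rewrite Qxy => /eqP; rewrite oner_eq0.
apply/matrixP => x y; rewrite mxE; case: eqVneq => [<- | x_neq_y] /=.
  have := row x; rewrite (bigD1 x) //= big1 ?addr0 // => z z_neq_x.
  by case: (Q01 x z) => // /Q1_diag/esym/eqP; rewrite (negbTE z_neq_x).
by case: (Q01 x y) => // /Q1_diag/eqP; rewrite (negbTE x_neq_y).
Qed.

Lemma zero_one_mx_trmx (S T : 'M[R]_n) : zero_one_mx S -> zero_one_mx T ->
    (forall x, (S *m T) x x = (S *m J) x x) ->
    (forall x, (T *m S) x x = (T *m J) x x) ->
  T = S^T.
Proof.
have sub (S' T' : 'M[R]_n) : zero_one_mx S' -> zero_one_mx T' ->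
    (forall x, (S' *m T') x x = (S' *m J) x x) -> forall x y, S' x y = 1 -> T' y x = 1.
  move=> S01 T01 ST x; apply: zero_one_supp_subset (S01 x) (fun z => T01 z x) _.
  by have := ST x; rewrite !mxE => ->; apply: eq_bigr => z _; rewrite mxE mulr1.
move=> S01 T01 ST TS; apply/matrixP => x y; rewrite mxE.
case: (T01 x y) (S01 y x) => Txy [] Syx; rewrite Txy Syx //.
  by rewrite -Txy (sub _ _ S01 T01 ST).
by rewrite -Syx (sub _ _ T01 S01 TS).
Qed.

End ZeroOne.

Local Notation J := (const_mx 1).

Lemma schur_zero_one_idem v (M : 'M[CC]_v) : zero_one_mx M -> schur M M = M.
Proof.
move=> M01; apply/matrixP => x y; rewrite mxE.
by case: (M01 x y) => ->; rewrite ?mulr0 ?mulr1.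
Qed.

Lemma schur_const1l v (M : 'M[CC]_v) : schur J M = M.
Proof. by apply/matrixP => x y; rewrite !mxE mul1r. Qed.

Lemma zero_one_const1 v : zero_one_mx (J : 'M[CC]_v).
Proof. by move=> x y; rewrite mxE; right. Qed.

Lemma zero_one_mx1 v : zero_one_mx (1%:M : 'M[CC]_v).
Proof. by move=> x y; rewrite mxE; case: (x == y); [right | left]. Qed.

Lemma mulmx_const1 v : (J : 'M[CC]_v) *m J = v%:R *: (J : 'M_v).
Proof.
apply/matrixP => x y; rewrite !mxE mulr1; under eq_bigr do rewrite !mxE mulr1.
by rewrite sumr_const card_ord.
Qed.

Lemma schur_mulmx_trmx1 v (M : 'M[CC]_v) :
  zero_one_mx M -> schur (M *m M^T) 1%:M = schur (M *m J) 1%:M.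
Proof.
move=> M01; apply/matrixP => x y; rewrite !mxE.
case: eqVneq => [<- | _]; rewrite ?mulr0 ?mulr1 //.
by apply: eq_bigr => z _; rewrite !mxE mulr1; case: (M01 x z) => ->; rewrite ?mulr0 ?mulr1.
Qed.

Lemma ctrmx_lincomb_zero_one v n (c : 'I_n -> CC) (B : 'I_n -> 'M[CC]_v) :
    (forall i, zero_one_mx (B i)) ->
  ctrmx (\sum_i c i *: B i) = \sum_i (c i)^* *: (B i)^T.
Proof.
move=> B01; apply/matrixP => x y; rewrite !mxE !summxE rmorph_sum.
apply: eq_bigr => i _.
by rewrite !mxE rmorphM; case: (B01 i y x) => ->; rewrite ?rmorph0 ?rmorph1.
Qed.

Section SchemeSpan.
Variables (v d : nat) (A : 'I_d.+1 -> 'M[CC]_v) (E : {pred CC}).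
Hypothesis schemeA : association_scheme A.
Hypothesis subfieldE : is_subfield E.
Local Notation W := (span_in E A).

Let mem0E : 0 \in E. Proof. by case: subfieldE. Qed.
Let mem1E : 1 \in E. Proof. by case: subfieldE => _ []. Qed.
Let memDE x y : x \in E -> y \in E -> x + y \in E.
Proof. by case: subfieldE => _ [_ [+ _]]; apply. Qed.
Let memME x y : x \in E -> y \in E -> x * y \in E.
Proof. by case: subfieldE => _ [_ [_ [_ [+ _]]]]; apply. Qed.
Let memE_sum (I : Type) (r : seq I) (F : I -> CC) :
  (forall i, F i \in E) -> \sum_(i <- r) F i \in E.
Proof. by move=> FE; apply: (big_ind (fun x => x \in E)) => // *; apply: memDE. Qed.
Let memE_nat n : n%:R \in E.
Proof. by rewrite -[n]card_ord -sumr_const; apply: memE_sum. Qed.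

Lemma zero_one_scheme i : zero_one_mx (A i).
Proof. by case: schemeA => + _; apply. Qed.

Lemma scheme_memE i x y : A i x y \in E.
Proof. by case: (zero_one_scheme i x y) => ->. Qed.

Lemma sum_scheme x y : \sum_i A i x y = 1.
Proof.
by case: schemeA => _ [_ [/(congr1 (fun M : 'M[CC]_v => M x y)) + _]]; rewrite summxE mxE.
Qed.

Lemma span_in_lin a M N : a \in E -> W M -> W N -> W (a *: M + N).
Proof.
move=> aE [c [cE ->]] [c' [c'E ->]]; exists (fun i => a * c i + c' i); split.
  by move=> i; apply: memDE => //; apply: memME.
by rewrite scaler_sumr -big_split; apply: eq_bigr => i _; rewrite scalerA scalerDl.
Qed.

Lemma span_in0 : W 0.
Proof. by exists (fun _ => 0); split=> //; rewrite big1 // => i _; rewrite scale0r. Qed.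

Lemma span_inZ a M : a \in E -> W M -> W (a *: M).
Proof.
by move=> aE WM; rewrite -[_ *: _]addr0; apply: span_in_lin => //; apply: span_in0.
Qed.

Lemma span_in_sum (I : Type) (r : seq I) (F : I -> 'M_v) :
  (forall i, W (F i)) -> W (\sum_(i <- r) F i).
Proof.
move=> WF; apply: (big_ind W) => //; first exact: span_in0.
by move=> M N WM WN; rewrite -[M]scale1r; apply: span_in_lin.
Qed.

Lemma span_in_scheme i : W (A i).
Proof.
exists (fun k => (k == i)%:R); split=> [k | ]; first by case: (k == i).
rewrite (bigD1 i) //= eqxx scale1r big1 ?addr0 // => k /negbTE ->; by rewrite scale0r.
Qed.

Lemma span_in_const1 : W J.
Proof. by case: schemeA => _ [_ [<- _]]; apply: span_in_sum span_in_scheme. Qed.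

Lemma span_in1 : W 1%:M.
Proof. by case: schemeA => _ [<- _]; apply: span_in_scheme. Qed.

Lemma span_in_trmx_scheme i : W (A i)^T.
Proof. by case: schemeA => _ [_ [_ [/(_ i) [j ->] _]]]; apply: span_in_scheme. Qed.

(* The [A k] have disjoint supports, so the complex coefficient of [A k] in [M]
   is an entry of [M]. *)
Lemma span_in_of_Cspan (M : 'M[CC]_v) :
  (forall x y, M x y \in E) -> Cspan A M -> W M.
Proof.
move=> ME [c [_ defM]].
pose c' k := if [pick p | A k p.1 p.2 == 1] is Some p then M p.1 p.2 else 0.
exists c'; split=> [k | ]; first by rewrite /c'; case: pickP.
rewrite {1}defM; apply: eq_bigr => k _; rewrite /c'.
case: pickP => [[x y] /= /eqP Akxy | A_neq1].
  rewrite defM summxE (bigD1 k) //= mxE Akxy mulr1 big1 ?addr0 // => l l_neq_k.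
  have := zero_one_sum1 (fun j => zero_one_scheme j x y) (sum_scheme x y) Akxy l_neq_k.
  by rewrite mxE => ->; rewrite mulr0.
suff -> : A k = 0 by rewrite !scaler0.
apply/matrixP => x y; rewrite mxE.
by case: (zero_one_scheme k x y) (A_neq1 (x, y)) => ->; rewrite ?eqxx.
Qed.

Lemma span_in_mulmx_scheme i j : W (A i *m A j).
Proof.
case: schemeA => _ [_ [_ [_ [_ /(_ i j) Cspan_ij]]]]; apply: span_in_of_Cspan Cspan_ij.
by move=> x y; rewrite mxE; apply: memE_sum => z; apply: memME; apply: scheme_memE.
Qed.

Lemma span_in_mulmx_const1 i : W (A i *m J).
Proof.
case: schemeA => _ [_ [<- _]]; rewrite mulmx_sumr.
by apply: span_in_sum => j; apply: span_in_mulmx_scheme.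
Qed.

Section SchemeHom.
Variable psi : 'M[CC]_v -> 'M[CC]_v.
Hypothesis psi_linear : forall (a : CC) M N, a \in E -> W M -> W N ->
  psi (a *: M + N) = a *: psi M + psi N.
Hypothesis psi_neq0 : exists M, W M /\ psi M != 0.
Hypothesis psiM : forall M N, W M -> W N -> psi (M *m N) = psi M *m psi N.
Hypothesis psi_schur :
  forall M N, W M -> W N -> psi (schur M N) = schur (psi M) (psi N).

Lemma psi0 : psi 0 = 0.
Proof.
have := psi_linear mem1E span_in0 span_in0.
by rewrite !scale1r addr0 -{1}[psi 0]addr0 => /addrI <-.
Qed.

Lemma psiZ a M : a \in E -> W M -> psi (a *: M) = a *: psi M.
Proof. by move=> aE WM; have := psi_linear aE WM span_in0; rewrite !addr0 psi0 addr0. Qed.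

Lemma psi_lincomb (I : Type) (r : seq I) (c : I -> CC) (B : I -> 'M_v) :
    (forall i, c i \in E) -> (forall i, W (B i)) ->
  psi (\sum_(i <- r) c i *: B i) = \sum_(i <- r) c i *: psi (B i).
Proof.
move=> cE WB; elim: r => [|i r IHr]; first by rewrite !big_nil psi0.
rewrite !big_cons psi_linear ?IHr //.
by apply: span_in_sum => j; apply: span_inZ.
Qed.

Lemma zero_one_psi M : W M -> schur M M = M -> zero_one_mx (psi M).
Proof. by move=> WM MM x y; apply: zero_one_idem; rewrite -{3}MM psi_schur // mxE. Qed.

Lemma psi_const1 : psi J = J.
Proof.
have WJ := span_in_const1.
apply: zero_one_mx_sqr_scale.
- exact: zero_one_psi WJ (schur_zero_one_idem (@zero_one_const1 v)).
- by rewrite -psiM // (mulmx_const1 v) psiZ.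
have [M [WM]] := psi_neq0; apply: contraNneq => psiJ0.
rewrite -(schur_const1l M) psi_schur // psiJ0.
by apply/eqP/matrixP => x y; rewrite !mxE mul0r.
Qed.

Lemma psi1 : psi 1%:M = 1%:M.
Proof.
move: span_in1 span_in_const1 => W1 WJ.
apply: zero_one_mx_idem_stochastic.
- exact: zero_one_psi W1 (schur_zero_one_idem (@zero_one_mx1 v)).
- by rewrite -psiM // mul1mx.
- by rewrite -psi_const1 -psiM // mul1mx.
by rewrite -psi_const1 -psiM // mulmx1.
Qed.

Lemma zero_one_psi_scheme i : zero_one_mx (psi (A i)).
Proof.
exact: zero_one_psi (span_in_scheme i) (schur_zero_one_idem (zero_one_scheme i)).
Qed.

Lemma psi_trmx_scheme i : psi (A i)^T = (psi (A i))^T.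
Proof.
have diag k l : (A k)^T = A l ->
    forall x, (psi (A k) *m psi (A l)) x x = (psi (A k) *m J) x x.
  move=> Akl x; have := congr1 psi (schur_mulmx_trmx1 (zero_one_scheme k)).
  move: (span_in1) (span_in_const1) (span_in_scheme k) (span_in_scheme l) => W1 WJ WAk WAl.
  move: (span_in_mulmx_scheme k l) (span_in_mulmx_const1 k) => WAkl WAkJ.
  rewrite Akl !psi_schur // !psiM // psi1 psi_const1.
  by move/(congr1 (fun M : 'M[CC]_v => M x x)); rewrite !mxE eqxx !mulr1.
case: schemeA => _ [_ [_ [/(_ i) [j Aij] _]]].
have Aji : (A j)^T = A i by rewrite -Aij trmxK.
rewrite Aij; apply: zero_one_mx_trmx (diag _ _ Aij) (diag _ _ Aji);
  exact: zero_one_psi_scheme.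
Qed.

Lemma psi_trmx M : W M -> psi M^T = (psi M)^T.
Proof.
have trmx_lincomb (c : 'I_d.+1 -> CC) (B : 'I_d.+1 -> 'M_v) :
    (\sum_i c i *: B i)^T = \sum_i c i *: (B i)^T.
  by rewrite linear_sum; apply: eq_bigr => i _; rewrite linearZ.
move=> [c [cE ->]]; rewrite (psi_lincomb _ cE span_in_scheme) !trmx_lincomb.
rewrite (psi_lincomb _ cE span_in_trmx_scheme).
by apply: eq_bigr => i _; rewrite psi_trmx_scheme.
Qed.

Hypothesis conjE : forall x, x \in E -> x^* \in E.

Lemma psi_ctrmx M : W M -> psi (ctrmx M) = ctrmx (psi M).
Proof.
move=> [c [cE ->]]; have cE' i : (c i)^* \in E by apply: conjE.
rewrite (psi_lincomb _ cE span_in_scheme) (ctrmx_lincomb_zero_one _ zero_one_psi_scheme).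
rewrite (ctrmx_lincomb_zero_one _ zero_one_scheme) (psi_lincomb _ cE' span_in_trmx_scheme).
by apply: eq_bigr => i _; rewrite psi_trmx_scheme.
Qed.

End SchemeHom.
End SchemeSpan.

Theorem lemma3p2 (v d : nat) (A : 'I_d.+1 -> 'M[CC]_v) (E : {pred CC})
    (psi : 'M[CC]_v -> 'M[CC]_v) :
  association_scheme A ->
  is_subfield E ->
  (forall p, scheme_eigenvalue A p -> p \in E) ->
  (forall x, x \in E -> x^* \in E) ->
  (forall M, span_in E A M -> span_in E A (psi M)) ->
  (forall (a : CC) M N, a \in E -> span_in E A M -> span_in E A N ->
     psi (a *: M + N) = a *: psi M + psi N) ->
  (exists M, span_in E A M /\ psi M != 0) ->
  (forall M N, span_in E A M -> span_in E A N ->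
     psi (M *m N) = psi M *m psi N) ->
  (forall M N, span_in E A M -> span_in E A N ->
     psi (schur M N) = schur (psi M) (psi N)) ->
  forall M, span_in E A M ->
    psi (M^T) = (psi M)^T /\ psi (ctrmx M) = ctrmx (psi M).
Proof.
move=> schemeA subfieldE _ conjE _ psi_linear psi_neq0 psiM psi_schur M WM.
split; first by have := psi_trmx schemeA subfieldE psi_linear psi_neq0 psiM psi_schur WM.
by have := psi_ctrmx schemeA subfieldE psi_linear psi_neq0 psiM psi_schur conjE WM.
Qed.
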